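(* Let $d$ be a defined $n$-ary operator and let $e_1,\ldots,e_n$ be expressions. Let $i\in\{1,\ldots,n\}$ be such that $e_i$ is rigid. Let $\mathcal{M}$ be a Kripke model and $w$ a state of $\mathcal{M}$, and let $x$ be a rigid variable that does not occur free in any $e_j$. Then $$[\![d(e_1,\ldots,e_n)]\!]^\mathcal{M}_w=[\![d(e_1,\ldots,e_{i-1},x,e_{i+1},\ldots,e_n)]\!]^{\mathcal{M}'}_w,$$ where $\mathcal{M}'$ agrees with $\mathcal{M}$ except that its valuation of rigid variables maps $x$ to $[\![e_i]\!]^\mathcal{M}_w$.
   Context: FOML syntax. Fix disjoint, non-empty, denumerable sets $\mathcal{X}$ (rigid variables), $\mathcal{V}$ (flexible variables) and $\mathcal{O}$ (operator symbols with arities). Expressions are given by $e ::= x \mid v \mid op(e,\ldots,e) \mid e=e \mid \mathrm{FALSE} \mid e\Rightarrow e \mid \forall x:e \mid \nabla e \mid d(e,\ldots,e)$, where $d$ ranges over defined operators. Only rigid variables are bound. Operator definitions. A definition has the form $d(x_1,\ldots,x_n)\triangleq e$, where: - $d$ is a fresh symbol; - $x_1,\ldots,x_n$ are pairwise distinct rigid variables; - $e$ is an expression, possibly using flexible variables and previously defined operators, whose free rigid variables are among $x_1,\ldots,x_n$. An expression is rigid iff, after all defined operators are fully expanded, it contains no flexible variable and no subexpression $\nabla e$. Semantics. A Kripke model is $\mathcal{M}=(\mathcal{I},\xi,\mathcal{W},R,\zeta,\nabla_\mathcal{M})$, where: - $\mathcal{I}$ is a first-order interpretation with distinct values $\mathsf{tt},\mathsf{ff}$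 in its universe; - $\xi:\mathcal{X}\to|\mathcal{I}|$; - $\mathcal{W}$ is a non-empty set of states and $R\subseteq\mathcal{W}^2$; - $\zeta:\mathcal{V}\times\mathcal{W}\to|\mathcal{I}|$; - $\nabla_\mathcal{M}:2^{|\mathcal{I}|}\to|\mathcal{I}|$ satisfies $\nabla_\mathcal{M}(S)=\mathsf{tt}$ iff $S\subseteq\{\mathsf{tt}\}$. Values are defined as follows. - $[\![x]\!]_w=\xi(x)$ and $[\![v]\!]_w=\zeta(v,w)$. - $[\![op(\vec e)]\!]_w=\mathcal{I}(op)(\ldots)$. - $[\![e_1=e_2]\!]_w$ is $\mathsf{tt}$ iff the values are equal, and $\mathsf{ff}$ otherwise. - $[\![\mathrm{FALSE}]\!]_w=\mathsf{ff}$. - $[\![\varphi\Rightarrow\psi]\!]_w=\mathsf{tt}$ iff $[\![\varphi]\!]_w\ne\mathsf{tt}$ or $[\![\psi]\!]_w=\mathsf{tt}$, and $\mathsf{ff}$ otherwise. - $\forall$ quantifies over the rigid variable valuation only, as usual. - $[\![\nabla\varphi]\!]_w=\nabla_\mathcal{M}(\{[\![\varphi]\!]_{w'}:(w,w')\in R\})$. - For $d(x_1,\ldots,x_n)\triangleq e$, $[\![d(e_1,\ldots,e_n)]\!]^\mathcal{M}_w=[\![e[e_1/x_1,\ldots,e_n/x_n]]\!]^\mathcal{M}_w$, using capture-avoiding substitution. *)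

From Stdlib Require Import List Arith ClassicalEpsilon.
Import ListNotations.
Set Implicit Arguments.

Inductive expr : Type :=
| RVar  (x : nat)
| FVar  (v : nat)
| Op    (o : nat) (args : list expr)
| Eq    (a b : expr)
| FALSE
| Imp   (a b : expr)
| All   (x : nat) (e : expr)      (* \forall x : e, x rigid *)
| Nab   (e : expr)
| Def   (d : nat) (args : list expr).

Fixpoint maxv (e : expr) : nat :=
  match e with
  | RVar x => x
  | FVar _ | FALSE => 0
  | Op _ es | Def _ es => list_max (map maxv es)
  | Eq a b | Imp a b => Nat.max (maxv a) (maxv b)
  | All x b => Nat.max x (maxv b)
  | Nab b => maxv b
  end.

Fixpoint fv (e : expr) : list nat :=
  match e with
  | RVar x => [x]
  | FVar _ | FALSE => []
  | Op _ es | Def _ es => flat_map fv es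
  | Eq a b | Imp a b => fv a ++ fv b
  | All x b => remove Nat.eq_dec x (fv b)
  | Nab b => fv b
  end.

Definition upd {A : Type} (f : nat -> A) (x : nat) (a : A) : nat -> A :=
  fun z => if Nat.eqb z x then a else f z.

(* Capture-avoiding simultaneous substitution for rigid variables:
   the bound variable is always renamed to a variable fresh for the body
   and for the substituted expressions. *)
Fixpoint subst (s : nat -> expr) (e : expr) : expr :=
  match e with
  | RVar x => s x
  | FVar v => FVar v
  | Op o es => Op o (map (subst s) es)
  | Eq a b => Eq (subst s a) (subst s b)
  | FALSE => FALSE
  | Imp a b => Imp (subst s a) (subst s b)
  | All x b =>
      let y := S (Nat.max (maxv b) (list_max (map (fun z => maxv (s z)) (fv e)))) in
      All y (subst (upd s x (RVar y)) b)
  | Nab b => Nab (subst s b)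
  | Def d es => Def d (map (subst s) es)
  end.

Fixpoint mk_sub (xs : list nat) (es : list expr) (z : nat) : expr :=
  match xs, es with
  | x :: xs', e :: es' => if Nat.eqb z x then e else mk_sub xs' es' z
  | _, _ => RVar z
  end.

(* A definition d(x_1,...,x_n) == body is the pair (xs, body); the operator
   named d is the d-th entry of the definition list. *)
Definition defn := (list nat * expr)%type.

(* Full expansion of defined operators, relative to a table of already
   fully expanded bodies. *)
Fixpoint expand (tbl : list defn) (e : expr) : expr :=
  match e with
  | RVar x => RVar x
  | FVar v => FVar v
  | Op o es => Op o (map (expand tbl) es)
  | Eq a b => Eq (expand tbl a) (expand tbl b)
  | FALSE => FALSE
  | Imp a b => Imp (expand tbl a) (expand tbl b)
  | All x b => All x (expand tbl b)
  | Nab b => Nab (expand tbl b)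
  | Def d es =>
      match nth_error tbl d with
      | Some (xs, b) => subst (mk_sub xs (map (expand tbl) es)) b
      | None => FALSE
      end
  end.

(* expanded bodies, computed in order (each body uses only earlier operators) *)
Definition exp_table (defs : list defn) : list defn :=
  fold_left (fun acc (p : defn) => acc ++ [(fst p, expand acc (snd p))]) defs [].

Definition full_expand (defs : list defn) (e : expr) : expr :=
  expand (exp_table defs) e.

Fixpoint wf_expr (ar : nat -> nat) (defs : list defn) (k : nat) (e : expr) : Prop :=
  match e with
  | RVar _ | FVar _ | FALSE => True
  | Op o es => length es = ar o /\
      (fix go (l : list expr) : Prop :=
         match l with [] => True | a :: l' => wf_expr ar defs k a /\ go l' end) es
  | Eq a b | Imp a b => wf_expr ar defs k a /\ wf_expr ar defs k b
  | All _ b | Nab b => wf_expr ar defs k b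
  | Def d es => d < k /\
      (exists xs b, nth_error defs d = Some (xs, b) /\ length es = length xs) /\
      (fix go (l : list expr) : Prop :=
         match l with [] => True | a :: l' => wf_expr ar defs k a /\ go l' end) es
  end.

Definition wf_defs (ar : nat -> nat) (defs : list defn) : Prop :=
  forall k xs b, nth_error defs k = Some (xs, b) ->
    NoDup xs /\ incl (fv b) xs /\ wf_expr ar defs k b.

Fixpoint noflex (e : expr) : Prop :=
  match e with
  | RVar _ | FALSE => True
  | FVar _ | Nab _ => False
  | Op _ es | Def _ es =>
      (fix go (l : list expr) : Prop :=
         match l with [] => True | a :: l' => noflex a /\ go l' end) es
  | Eq a b | Imp a b => noflex a /\ noflex b
  | All _ b => noflex b
  end.

Definition rigid (defs : list defn) (e : expr) : Prop := noflex (full_expand defs e).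

Record kripke : Type := {
  D : Type;
  tt : D;
  ff : D;
  tt_ff : tt <> ff;
  Iop : nat -> list D -> D;
  xi : nat -> D;
  W : Type;
  W_inh : inhabited W;
  R : W -> W -> Prop;
  zeta : nat -> W -> D;
  nab : (D -> Prop) -> D;
  nab_spec : forall S : D -> Prop, nab S = tt <-> (forall v, S v -> v = tt)
}.

Definition set_xi (M : kripke) (xi' : nat -> D M) : kripke :=
  {| D := D M; tt := tt M; ff := ff M; tt_ff := tt_ff M; Iop := Iop M;
     xi := xi'; W := W M; W_inh := W_inh M; R := R M; zeta := zeta M;
     nab := nab M; nab_spec := nab_spec M |}.

Definition bool_val (M : kripke) (P : Prop) : D M :=
  if excluded_middle_informative P then tt M else ff M.

Fixpoint core (M : kripke) (rho : nat -> D M) (w : W M) (e : expr) {struct e} : D M :=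
  match e with
  | RVar x => rho x
  | FVar v => zeta M v w
  | Op o es => Iop M o (map (core M rho w) es)
  | Eq a b => bool_val M (core M rho w a = core M rho w b)
  | FALSE => ff M
  | Imp a b => bool_val M (core M rho w a <> tt M \/ core M rho w b = tt M)
  | All x b => bool_val M (forall a : D M, core M (upd rho x a) w b = tt M)
  | Nab b => nab M (fun v => exists w', R M w w' /\ core M rho w' b = v)
  | Def _ _ => ff M (* never reached on fully expanded expressions *)
  end.

(* [[e]]^M_w : value of e, defined operators being expanded
   (the clause [[d(e..)]] = [[body[e../x..]]] holds up to this expansion) *)
Definition sem (defs : list defn) (M : kripke) (w : W M) (e : expr) : D M :=
  core M (xi M) w (full_expand defs e).

(* e_1..e_{i-1}, y, e_{i+1}..e_n  (0-based index i) *)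
Definition replace_nth (i : nat) (y : expr) (es : list expr) : list expr :=
  firstn i es ++ y :: skipn (S i) es.

(* Expanding [d(e_1,...,e_n)] substitutes the expanded arguments for the
   parameters of the expanded body, and the value of a substitution instance
   depends only on the values of the substituted expressions at every state
   (every state, because [\nabla] inspects successors).  At position [i] the
   rigid argument has the same value at all states, namely its value at [w],
   which is what [x] denotes in the modified model.  At the other positions [x]
   does not occur free, and expansion never creates free variables, so changing
   the valuation of [x] is invisible there. *)

From Stdlib Require Import List Arith Lia ClassicalEpsilon FunctionalExtensionality PropExtensionality.
Import ListNotations.

Section ExprInd.
Variable P : expr -> Prop.
Hypothesis P_RVar : forall x, P (RVar x).
Hypothesis P_FVar : forall v, P (FVar v).
Hypothesis P_Op : forall o es, Forall P es -> P (Op o es).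
Hypothesis P_Eq : forall a b, P a -> P b -> P (Eq a b).
Hypothesis P_FALSE : P FALSE.
Hypothesis P_Imp : forall a b, P a -> P b -> P (Imp a b).
Hypothesis P_All : forall x b, P b -> P (All x b).
Hypothesis P_Nab : forall b, P b -> P (Nab b).
Hypothesis P_Def : forall d es, Forall P es -> P (Def d es).

Fixpoint expr_ind_nested (e : expr) : P e :=
  let fix args (l : list expr) : Forall P l :=
    match l with
    | [] => Forall_nil P
    | a :: l' => Forall_cons a (expr_ind_nested a) (args l')
    end in
  match e with
  | RVar x => P_RVar x
  | FVar v => P_FVar v
  | Op o es => P_Op o es (args es)
  | Eq a b => P_Eq a b (expr_ind_nested a) (expr_ind_nested b)
  | FALSE => P_FALSE
  | Imp a b => P_Imp a b (expr_ind_nested a) (expr_ind_nested b)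
  | All x b => P_All x b (expr_ind_nested b)
  | Nab b => P_Nab b (expr_ind_nested b)
  | Def d es => P_Def d es (args es)
  end.
End ExprInd.

Lemma fix_conj_Forall (P : expr -> Prop) (l : list expr) :
  (fix go (l : list expr) : Prop :=
     match l with [] => True | a :: l' => P a /\ go l' end) l -> Forall P l.
Proof. induction l; simpl; intros; [constructor | constructor; tauto]. Qed.

Lemma map_ext_Forall {A B} (f g : A -> B) (l : list A) :
  Forall (fun a => f a = g a) l -> map f l = map g l.
Proof. induction 1; simpl; f_equal; auto. Qed.

Lemma in_list_max_le (n : nat) (l : list nat) : In n l -> n <= list_max l.
Proof.
  intros Hn. apply (proj1 (Forall_forall _ _) (proj1 (list_max_le l _) (le_n _))), Hn.
Qed.

Lemma bool_val_ext (M : kripke) (P Q : Prop) : (P <-> Q) -> bool_val M P = bool_val M Q.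
Proof.
  intros H; unfold bool_val.
  destruct (excluded_middle_informative P), (excluded_middle_informative Q); tauto.
Qed.

Lemma nab_succ_ext (M : kripke) (w : W M) (f g : W M -> D M) :
  (forall w', f w' = g w') ->
  nab M (fun v => exists w', R M w w' /\ f w' = v) =
  nab M (fun v => exists w', R M w w' /\ g w' = v).
Proof.
  intros Hfg; f_equal; apply functional_extensionality; intro v.
  apply propositional_extensionality.
  split; intros [w' [Hw Hv]]; exists w'; rewrite <- Hv, Hfg; auto.
Qed.

Lemma core_eq_on_fv (M : kripke) (e : expr) : forall (rho1 rho2 : nat -> D M) (w : W M),
  (forall z, In z (fv e) -> rho1 z = rho2 z) -> core M rho1 w e = core M rho2 w e.
Proof.
  induction e using expr_ind_nested; intros rho1 rho2 w Hz; simpl in *; auto.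
  - f_equal; apply map_ext_Forall; rewrite Forall_forall in *.
    intros a Ha; apply H; auto; intros z Hz'; apply Hz, in_flat_map; eauto.
  - rewrite (IHe1 rho1 rho2), (IHe2 rho1 rho2); auto;
      intros; apply Hz, in_or_app; auto.
  - rewrite (IHe1 rho1 rho2), (IHe2 rho1 rho2); auto;
      intros; apply Hz, in_or_app; auto.
  - assert (Hbody : forall a, core M (upd rho1 x a) w e = core M (upd rho2 x a) w e).
    { intros a; apply IHe; intros z Hze; unfold upd.
      destruct (Nat.eqb_spec z x); auto; apply Hz, in_in_remove; auto. }
    apply bool_val_ext; split; intros H a; [rewrite <- Hbody | rewrite Hbody]; auto.
  - apply nab_succ_ext; auto.
Qed.

Lemma core_upd_notin_fv (M : kripke) (rho : nat -> D M) (w : W M) (e : expr) (y : nat) (a : D M) :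
  ~ In y (fv e) -> core M (upd rho y a) w e = core M rho w e.
Proof.
  intros Hy; apply core_eq_on_fv; intros z Hz; unfold upd.
  destruct (Nat.eqb_spec z y); congruence.
Qed.

Lemma fv_le_maxv (e : expr) : forall z, In z (fv e) -> z <= maxv e.
Proof.
  induction e using expr_ind_nested; intros z Hz; simpl in *; try tauto.
  - destruct Hz; [lia | tauto].
  - apply in_flat_map in Hz as [a [Ha Hz]]; rewrite Forall_forall in H.
    eapply Nat.le_trans; [apply H; eauto | apply in_list_max_le, in_map; auto].
  - apply in_app_or in Hz as [Hz | Hz]; [specialize (IHe1 _ Hz) | specialize (IHe2 _ Hz)]; lia.
  - apply in_app_or in Hz as [Hz | Hz]; [specialize (IHe1 _ Hz) | specialize (IHe2 _ Hz)]; lia.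
  - apply in_remove in Hz as [Hz _]; specialize (IHe _ Hz); lia.
  - auto.
  - apply in_flat_map in Hz as [a [Ha Hz]]; rewrite Forall_forall in H.
    eapply Nat.le_trans; [apply H; eauto | apply in_list_max_le, in_map; auto].
Qed.

Lemma subst_binder_fresh (s : nat -> expr) (b : expr) (zs : list nat) (z : nat) :
  In z zs ->
  ~ In (S (Nat.max (maxv b) (list_max (map (fun z => maxv (s z)) zs)))) (fv (s z)).
Proof.
  intros Hz Hin; apply fv_le_maxv in Hin.
  assert (maxv (s z) <= list_max (map (fun z => maxv (s z)) zs))
    by (apply in_list_max_le, in_map_iff; eauto).
  lia.
Qed.

Lemma core_subst_compat (M : kripke) (e : expr) :
  forall (rho1 rho2 : nat -> D M) (s1 s2 : nat -> expr) (w : W M),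
  (forall z, In z (fv e) -> forall w', core M rho1 w' (s1 z) = core M rho2 w' (s2 z)) ->
  core M rho1 w (subst s1 e) = core M rho2 w (subst s2 e).
Proof.
  induction e using expr_ind_nested; intros rho1 rho2 s1 s2 w Hz; simpl in *; auto.
  - f_equal; rewrite !map_map; apply map_ext_Forall; rewrite Forall_forall in *.
    intros a Ha; apply H; auto; intros z Hz'; apply Hz, in_flat_map; eauto.
  - rewrite (IHe1 rho1 rho2 s1 s2), (IHe2 rho1 rho2 s1 s2); auto;
      intros; apply Hz, in_or_app; auto.
  - rewrite (IHe1 rho1 rho2 s1 s2), (IHe2 rho1 rho2 s1 s2); auto;
      intros; apply Hz, in_or_app; auto.
  - set (y1 := S _); set (y2 := S _).
    assert (Hbody : forall a, core M (upd rho1 y1 a) w (subst (upd s1 x (RVar y1)) e) =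
                         core M (upd rho2 y2 a) w (subst (upd s2 x (RVar y2)) e)).
    { intros a; apply IHe; intros z Hze w'; unfold upd at 2 4.
      destruct (Nat.eqb_spec z x).
      - simpl; unfold upd; rewrite !Nat.eqb_refl; reflexivity.
      - assert (Hzr : In z (remove Nat.eq_dec x (fv e))) by (apply in_in_remove; auto).
        rewrite !core_upd_notin_fv by (apply subst_binder_fresh; exact Hzr).
        auto. }
    apply bool_val_ext; split; intros H a; [rewrite <- Hbody | rewrite Hbody]; auto.
  - apply nab_succ_ext; auto.
Qed.

Lemma core_noflex_state_indep (M : kripke) (e : expr) :
  noflex e -> forall (rho : nat -> D M) (w w' : W M), core M rho w e = core M rho w' e.
Proof.
  induction e using expr_ind_nested; intros Hn rho w w'; simpl in *; try tauto.
  - f_equal; apply map_ext_Forall.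
    apply fix_conj_Forall in Hn; rewrite Forall_forall in *; intros; apply H; auto.
  - destruct Hn as [Ha Hb]; rewrite (IHe1 Ha rho w w'), (IHe2 Hb rho w w'); auto.
  - destruct Hn as [Ha Hb]; rewrite (IHe1 Ha rho w w'), (IHe2 Hb rho w w'); auto.
  - apply bool_val_ext; split; intros Hall a;
      [rewrite <- (IHe Hn _ w w') | rewrite (IHe Hn _ w w')]; auto.
Qed.

(* [core] never reads the rigid valuation stored in the model. *)
Lemma core_set_xi (M : kripke) (xi' : nat -> D M) (e : expr) :
  forall (rho : nat -> D M) (w : W M), core (set_xi M xi') rho w e = core M rho w e.
Proof.
  induction e using expr_ind_nested; intros rho w; simpl; auto.
  - f_equal; apply map_ext_Forall; rewrite Forall_forall in *; intros; apply H; auto.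
  - rewrite IHe1, IHe2; reflexivity.
  - rewrite IHe1, IHe2; reflexivity.
  - apply (bool_val_ext M); split; intros Hall a; [rewrite <- IHe | rewrite IHe]; auto.
  - apply nab_succ_ext; auto.
Qed.

Lemma fv_subst_inv (e : expr) : forall (s : nat -> expr) (y : nat),
  In y (fv (subst s e)) -> exists z, In z (fv e) /\ In y (fv (s z)).
Proof.
  induction e using expr_ind_nested; intros s y Hy; simpl in *; try tauto.
  - exists x; auto.
  - rewrite flat_map_concat_map, map_map, <- flat_map_concat_map in Hy.
    apply in_flat_map in Hy as [a [Ha Hy]]; rewrite Forall_forall in H.
    destruct (H a Ha s y Hy) as [z [Hz1 Hz2]]; exists z; split; auto.
    apply in_flat_map; eauto.
  - apply in_app_or in Hy as [Hy | Hy];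
      [destruct (IHe1 s y Hy) as [z [? ?]] | destruct (IHe2 s y Hy) as [z [? ?]]];
      exists z; split; auto; apply in_or_app; auto.
  - apply in_app_or in Hy as [Hy | Hy];
      [destruct (IHe1 s y Hy) as [z [? ?]] | destruct (IHe2 s y Hy) as [z [? ?]]];
      exists z; split; auto; apply in_or_app; auto.
  - apply in_remove in Hy as [Hy Hne].
    destruct (IHe _ _ Hy) as [z [Hz1 Hz2]]; unfold upd in Hz2.
    destruct (Nat.eqb_spec z x).
    + simpl in Hz2; destruct Hz2; [congruence | tauto].
    + exists z; split; auto; apply in_in_remove; auto.
  - apply IHe; auto.
  - rewrite flat_map_concat_map, map_map, <- flat_map_concat_map in Hy.
    apply in_flat_map in Hy as [a [Ha Hy]]; rewrite Forall_forall in H.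
    destruct (H a Ha s y Hy) as [z [Hz1 Hz2]]; exists z; split; auto.
    apply in_flat_map; eauto.
Qed.

Lemma mk_sub_nth (xs : list nat) : forall (es es' : list expr) (z : nat),
  length es = length xs -> length es' = length xs -> In z xs ->
  exists j, j < length es /\ mk_sub xs es z = nth j es FALSE /\
            mk_sub xs es' z = nth j es' FALSE.
Proof.
  induction xs as [|x xs IH]; intros es es' z Hl Hl' Hz; [destruct Hz |].
  destruct es as [|a es]; [discriminate |]; destruct es' as [|a' es']; [discriminate |].
  simpl in *; destruct (Nat.eqb_spec z x).
  - exists 0; simpl; repeat split; lia.
  - destruct Hz as [Hz | Hz]; [congruence |].
    destruct (IH es es' z) as [j [? [? ?]]]; auto.
    exists (S j); simpl; repeat split; auto; lia.
Qed.

Lemma map_replace_nth (f : expr -> expr) (i : nat) (y : expr) (l : list expr) :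
  map f (replace_nth i y l) = replace_nth i (f y) (map f l).
Proof.
  unfold replace_nth; rewrite map_app, firstn_map, skipn_map; reflexivity.
Qed.

Lemma length_replace_nth (i : nat) (y : expr) (l : list expr) :
  i < length l -> length (replace_nth i y l) = length l.
Proof.
  intros Hi; unfold replace_nth.
  rewrite length_app, length_firstn, length_cons, length_skipn; lia.
Qed.

Lemma nth_replace_nth (i j : nat) (y : expr) (l : list expr) : i < length l ->
  nth j (replace_nth i y l) FALSE = if Nat.eqb j i then y else nth j l FALSE.
Proof.
  revert i j; induction l as [|a l IH]; intros [|i] [|j] Hi; simpl in *; try lia; auto.
  apply IH; lia.
Qed.

Lemma exp_table_snoc (defs : list defn) (p : defn) :
  exp_table (defs ++ [p]) = exp_table defs ++ [(fst p, expand (exp_table defs) (snd p))].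
Proof. unfold exp_table; rewrite fold_left_app; reflexivity. Qed.

Lemma map_fst_exp_table (defs : list defn) : map fst (exp_table defs) = map fst defs.
Proof.
  induction defs as [|p defs IH] using rev_ind; [reflexivity |].
  rewrite exp_table_snoc, !map_app; f_equal; exact IH.
Qed.

Lemma length_exp_table (defs : list defn) : length (exp_table defs) = length defs.
Proof.
  pose proof (f_equal (@length _) (map_fst_exp_table defs)) as H.
  rewrite !length_map in H; exact H.
Qed.

Lemma nth_error_map_fst (tbl : list defn) (d : nat) (xs : list nat) :
  nth_error (map fst tbl) d = Some xs -> exists b, nth_error tbl d = Some (xs, b).
Proof.
  revert d; induction tbl as [|[xs' b] tbl IH]; intros [|d] H; simpl in H |- *;
    try discriminate; [injection H as ->; eauto | exact (IH d H)].
Qed.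

Definition closed_table (tbl : list defn) : Prop :=
  forall d xs b, nth_error tbl d = Some (xs, b) -> incl (fv b) xs.

Lemma fv_expand_incl (ar : nat -> nat) (defs tbl : list defn) (k : nat) (e : expr) :
  (forall d, d < k -> nth_error (map fst tbl) d = nth_error (map fst defs) d) ->
  closed_table tbl -> wf_expr ar defs k e -> incl (fv (expand tbl e)) (fv e).
Proof.
  intros Hparams Hclosed; induction e using expr_ind_nested; intros Hwf; simpl in *;
    try apply incl_refl.
  - destruct Hwf as [_ Hes]; apply fix_conj_Forall in Hes; rewrite Forall_forall in *.
    intros y Hy; rewrite flat_map_concat_map, map_map, <- flat_map_concat_map in Hy.
    apply in_flat_map in Hy as [a [Ha Hy]]; apply in_flat_map; exists a; split; auto.
    apply (H a Ha (Hes a Ha)), Hy.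
  - destruct Hwf; apply incl_app; [apply incl_appl | apply incl_appr]; auto.
  - destruct Hwf; apply incl_app; [apply incl_appl | apply incl_appr]; auto.
  - intros y Hy; apply in_remove in Hy as [Hy Hne]; apply in_in_remove; auto.
    apply IHe; auto.
  - auto.
  - destruct Hwf as [Hd [[xs [b [Hdef Hlen]]] Hes]].
    apply fix_conj_Forall in Hes; rewrite Forall_forall in *.
    assert (Hxs : nth_error (map fst tbl) d = Some xs)
      by (rewrite Hparams by exact Hd; exact (map_nth_error fst d defs Hdef)).
    destruct (nth_error_map_fst tbl d xs Hxs) as [b' Hb']; rewrite Hb'.
    intros y Hy; apply fv_subst_inv in Hy as [z [Hz Hy]].
    apply (Hclosed _ _ _ Hb') in Hz.
    destruct (mk_sub_nth xs (map (expand tbl) es) (map (expand tbl) es) z)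
      as [j [Hj [Hsub _]]]; rewrite ?length_map; auto.
    rewrite length_map in Hj; rewrite Hsub in Hy.
    change FALSE with (expand tbl FALSE) in Hy; rewrite map_nth in Hy.
    apply in_flat_map; exists (nth j es FALSE); split; [apply nth_In; auto |].
    apply H; [apply nth_In | apply Hes, nth_In |]; auto.
Qed.

Lemma closed_exp_table (ar : nat -> nat) (defs : list defn) :
  wf_defs ar defs -> closed_table (exp_table defs).
Proof.
  intros Hwf.
  enough (Hpre : forall l r, l ++ r = defs -> closed_table (exp_table l))
    by (apply (Hpre defs []), app_nil_r).
  intros l; induction l as [|[xs b] l IH] using rev_ind; intros r Hlr.
  - intros [|d]; discriminate.
  - rewrite <- app_assoc in Hlr; specialize (IH _ Hlr).
    assert (Hdef : nth_error defs (length l) = Some (xs, b))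
      by (rewrite <- Hlr, nth_error_app2, Nat.sub_diag; auto).
    destruct (Hwf _ _ _ Hdef) as [_ [Hfv Hbody]].
    rewrite exp_table_snoc; intros d xs' b' Hd.
    rewrite nth_error_app, length_exp_table in Hd.
    destruct (Nat.ltb_spec d (length l)); [exact (IH _ _ _ Hd) |].
    destruct (d - length l) as [|[|m]]; simpl in Hd; try discriminate.
    injection Hd as <- <-.
    eapply incl_tran; [| exact Hfv]; eapply fv_expand_incl; [| exact IH | exact Hbody].
    intros d' Hd'; rewrite map_fst_exp_table, <- Hlr, map_app, nth_error_app1; auto.
    rewrite length_map; exact Hd'.
Qed.

Lemma core_replace_rigid_arg (M : kripke) (rho : nat -> D M) (w : W M)
    (es : list expr) (i x : nat) :
  i < length es -> noflex (nth i es FALSE) -> (forall e, In e es -> ~ In x (fv e)) ->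
  forall (j : nat) (w' : W M),
  core M rho w' (nth j es FALSE) =
  core M (upd rho x (core M rho w (nth i es FALSE))) w' (nth j (replace_nth i (RVar x) es) FALSE).
Proof.
  intros Hi Hrigid Hx j w'; rewrite nth_replace_nth by exact Hi.
  destruct (Nat.eqb_spec j i) as [-> | Hji].
  - simpl; unfold upd; rewrite Nat.eqb_refl.
    apply core_noflex_state_indep, Hrigid.
  - symmetry; apply core_upd_notin_fv.
    destruct (Nat.lt_ge_cases j (length es)) as [Hj | Hj].
    + apply Hx, nth_In, Hj.
    + rewrite nth_overflow by exact Hj; simpl; tauto.
Qed.

Lemma notin_fv_full_expand (ar : nat -> nat) (defs : list defn) (e : expr) (x : nat) :
  wf_defs ar defs -> wf_expr ar defs (length defs) e ->
  ~ In x (fv e) -> ~ In x (fv (full_expand defs e)).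
Proof.
  intros Hwf He Hx Hin; apply Hx.
  eapply fv_expand_incl; [| exact (closed_exp_table ar defs Hwf) | exact He | exact Hin].
  intros; rewrite map_fst_exp_table; reflexivity.
Qed.

Theorem lemma1 (ar : nat -> nat) (defs : list defn) (d : nat) (xs : list nat)
  (body : expr) (es : list expr) (i : nat) (M : kripke) (w : W M) (x : nat) :
  wf_defs ar defs ->
  nth_error defs d = Some (xs, body) ->
  length es = length xs ->
  (forall e, In e es -> wf_expr ar defs (length defs) e) ->
  i < length es ->
  rigid defs (nth i es FALSE) ->
  (forall e, In e es -> ~ In x (fv e)) ->
  sem defs M w (Def d es) =
  sem defs (set_xi M (upd (xi M) x (sem defs M w (nth i es FALSE)))) w
      (Def d (replace_nth i (RVar x) es)).
Proof.
  intros Hwf Hd Hlen Hwfe Hi Hrigid Hx.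
  unfold sem, rigid in *; rewrite core_set_xi; simpl xi.
  assert (Hparams : nth_error (map fst (exp_table defs)) d = Some xs)
    by (rewrite map_fst_exp_table; exact (map_nth_error fst d defs Hd)).
  destruct (nth_error_map_fst _ d xs Hparams) as [body' Hbody'].
  unfold full_expand; cbn [expand]; rewrite Hbody', map_replace_nth; cbn [expand].
  set (A := map (expand (exp_table defs)) es).
  assert (HA : length A = length es) by apply length_map.
  assert (HnthA : forall j, nth j A FALSE = expand (exp_table defs) (nth j es FALSE))
    by (intros j; exact (map_nth (expand (exp_table defs)) es FALSE j)).
  apply core_subst_compat; intros z Hz w'.
  apply (closed_exp_table ar defs Hwf _ _ _ Hbody') in Hz.
  destruct (mk_sub_nth xs A (replace_nth i (RVar x) A) z) as [j [_ [-> ->]]];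
    try rewrite length_replace_nth; try lia; auto.
  rewrite <- HnthA; apply core_replace_rigid_arg; [lia | rewrite HnthA; exact Hrigid |].
  intros e He; apply in_map_iff in He as [e0 [<- He0]].
  apply (notin_fv_full_expand ar); auto.
Qed.
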